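(* Let $G$ be a simple graph with $m$ edges and $W$ wedges, and let $\mathcal{S}$ be a fixed nonempty subset of the wedges of $G$. Let $\mathcal{R}=(r_1,\dots,r_s)$ be $s\ge 2$ independent uniformly random edges of $G$, and let $X$ be the number of index pairs $i<j$ such that $\{r_i,r_j\}\in\mathcal{S}$. (1) $\mathbf{E}[X] = \binom{s}{2}\cdot \frac{2|\mathcal{S}|}{m^2}$. (2) There is an absolute constant $c'$ such that for every $\gamma\in(0,1)$: if $W\ge m$ and $s \ge c' m/(\gamma^3\sqrt{W})$, then with probability at least $1-\gamma$, $|X-\mathbf{E}[X]| \le (\gamma W/|\mathcal{S}|)\,\mathbf{E}[X]$.
   Context: A wedge is a path of length 2 in $G$, i.e. an unordered pair of distinct edges sharing exactly one vertex; $W$ denotes the total number of wedges of $G$. *)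

From HB Require Import structures.
From mathcomp Require Import all_boot all_order all_algebra.
Set Implicit Arguments. Unset Strict Implicit. Unset Printing Implicit Defensive.
Import Order.TTheory GRing.Theory Num.Theory.

Section GraphDefs.
Variables (V : finType) (e : rel V).

Definition edges : {set {set V}} :=
  [set A : {set V} | [exists x, exists y, e x y && (A == [set x; y])]].

Definition wedges : {set {set {set V}}} :=
  [set P : {set {set V}} | [exists A, exists B,
     [&& A \in edges, B \in edges, A != B, #|A :&: B| == 1 & P == [set A; B]]]].

(* Sample space of s independent uniform edges: all s-tuples of edges
   (uniform measure on this finite set). *)
Definition sample_space (s : nat) : {set {ffun 'I_s -> {set V}}} :=
  [set r : {ffun 'I_s -> {set V}} | [forall i, r i \in edges]].

Definition Xcount (S : {set {set {set V}}}) (s : nat)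
    (r : {ffun 'I_s -> {set V}}) : nat :=
  #|[set p : 'I_s * 'I_s | (p.1 < p.2)%N && ([set r p.1; r p.2] \in S)]|.

Definition expectX (R : numFieldType) (S : {set {set {set V}}}) (s : nat) : R :=
  ((\sum_(r in sample_space s) (Xcount S r)%:R) / (#|sample_space s|)%:R)%R.

Definition probX (R : numFieldType) (s : nat)
    (P : {ffun 'I_s -> {set V}} -> bool) : R :=
  ((#|[set r in sample_space s | P r]|)%:R / (#|sample_space s|)%:R)%R.

End GraphDefs.

From HB Require Import structures.
From mathcomp Require Import all_boot all_order all_algebra zify ring lra.
Import Order.TTheory GRing.Theory Num.Theory.
Set Implicit Arguments. Unset Strict Implicit. Unset Printing Implicit Defensive.

(* X is the sum over index pairs p of indicators Y_p, and an
   ordered pair of independent uniform edges forms a wedge of S with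
   probability p0 = 2|S|/m^2; hence E[X] = (s choose 2) p0 (part 1).
   For part 2 we bound E[X^2] = sum_{p,q} E[Y_p Y_q]: disjoint index pairs
   are independent (p0^2), equal pairs give p0, and pairs sharing one index
   give at most c3 = 4 sqrt(W) 2|S| / m^3, since an edge lies in at most
   4 sqrt(W) wedges (two edges through a common vertex always form a wedge).
   Chebyshev's inequality and an elementary numerical estimate then yield the
   concentration bound with the constant c' = 256. *)

Lemma set2_inj (T : finType) (a b x y : T) :
  x != y -> [set a; b] = [set x; y] -> (a, b) = (x, y) \/ (a, b) = (y, x).
Proof.
move=> nxy E.
have ax : (a == x) || (a == y) by rewrite -in_set2 -E set21.
have bx : (b == x) || (b == y) by rewrite -in_set2 -E set22.
have xa : (x == a) || (x == b) by rewrite -in_set2 E set21.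
have ya : (y == a) || (y == b) by rewrite -in_set2 E set22.
move: ax bx xa ya nxy => /orP[]/eqP-> /orP[]/eqP->; rewrite ?eqxx ?orbb //=;
  by [left | right | move=> /eqP-> _; rewrite eqxx | move=> _ /eqP->; rewrite eqxx].
Qed.

Lemma card_ordered_pairs (T : finType) (S : {set {set T}}) :
  {in S, forall P : {set T}, #|P| = 2} ->
  #|[set p : T * T | [set p.1; p.2] \in S]| = (2 * #|S|)%N.
Proof.
move=> S2; rewrite -sum1dep_card.
rewrite (partition_big (fun p => [set p.1; p.2]) (mem S)) //= mulnC -sum_nat_const.
apply: eq_bigr => P PS; have /eqP/cards2P[x [y [nxy defP]]] := S2 P PS; subst P.
rewrite (eq_bigl (mem [set (x, y); (y, x)])) ?sum1_card ?cards2; last first.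
  move=> [a b] /=; rewrite !inE; apply/andP/orP => [[_ /eqP/(set2_inj nxy)]|].
    by case=> [[-> ->]|[-> ->]]; [left | right].
  by case=> /eqP[-> ->]; rewrite ?[[set y; x]]setUC eqxx PS.
by rewrite xpair_eqE (negbTE nxy).
Qed.

Section Graph.
Variables (V : finType) (e : rel V).
Hypothesis e_irr : irreflexive e.

Notation E := (edges e).

Lemma edge_card2 A : A \in E -> #|A| = 2.
Proof.
rewrite inE => /existsP[x /existsP[y /andP[exy /eqP->]]].
rewrite cards2; suff -> : x != y by [].
by apply: contraTneq exy => ->; rewrite e_irr.
Qed.

Lemma wedgeP a b : [set a; b] \in wedges e ->
  [/\ a \in E, b \in E, a != b & #|a :&: b| = 1].
Proof.
rewrite inE => /existsP[x /existsP[y /and5P[xE yE nxy /eqP xy1 /eqP]]].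
by case/(set2_inj nxy) => -[-> ->]; rewrite // eq_sym setIC.
Qed.

Lemma wedge_card2 P : P \in wedges e -> #|P| = 2.
Proof.
rewrite inE => /existsP[x /existsP[y /and5P[_ _ nxy _ /eqP->]]].
by rewrite cards2 nxy.
Qed.

Lemma edges_meet1 A B z : A \in E -> B \in E -> A != B ->
  z \in A -> z \in B -> #|A :&: B| = 1.
Proof.
move=> AE BE nAB zA zB.
have nsAB : ~~ (A \subset B).
  by apply: contra nAB => sAB; rewrite eqEcard sAB !edge_card2.
have : #|A :&: B| < #|A|.
  by apply: proper_card; rewrite properE subsetIl subsetIidl.
have : 0 < #|A :&: B| by apply/card_gt0P; exists z; rewrite inE zA.
by rewrite (edge_card2 AE); lia.
Qed.

Definition star (z : V) : {set {set V}} := [set A in E | z \in A].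

(* Any two edges of a star form a wedge, so a star has at most W pairs. *)
Lemma bin_star_le z : 'C(#|star z|, 2) <= #|wedges e|.
Proof.
rewrite -cards_draws; apply/subset_leq_card/subsetP => P.
rewrite inE => /andP[sPz /cards2P[A [B [nAB defP]]]].
have /setIdP[AE zA] : A \in star z by rewrite (subsetP sPz) // defP set21.
have /setIdP[BE zB] : B \in star z by rewrite (subsetP sPz) // defP set22.
rewrite inE; apply/existsP; exists A; apply/existsP; exists B.
by rewrite AE BE nAB (edges_meet1 AE BE nAB zA zB) defP !eqxx.
Qed.

Definition wnbr (S : {set {set {set V}}}) (a : {set V}) : {set {set V}} :=
  [set b | [set a; b] \in S].

Lemma wnbr_sub_star (S : {set {set {set V}}}) (a : {set V}) x y :
  S \subset wedges e -> a = [set x; y] -> wnbr S a \subset star x :|: star y.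
Proof.
move=> SW defa; apply/subsetP => b; rewrite inE => /(subsetP SW)/wedgeP[_ bE _ ab1].
have [z] : exists z, z \in a :&: b by apply/card_gt0P; rewrite ab1.
case/setIP; rewrite defa => /set2P[] <- zb; apply/setUP; [left | right]; exact/setIdP.
Qed.
End Graph.

Lemma sq_le_of_bin d W : 'C(d, 2) <= W -> 0 < W -> d * d <= 4 * W.
Proof.
have := mul_bin_left d 1; rewrite bin1 subn1 => d_bin dW W0.
by case: (leqP d 1) => d1; nia.
Qed.

Lemma sq_le_bin s : 1 < s -> s * s <= 4 * 'C(s, 2).
Proof. by have := mul_bin_left s 1; rewrite bin1 subn1 => s_bin s2; nia. Qed.

Section WedgeDegree.
Variables (R : rcfType) (V : finType) (e : rel V) (S : {set {set {set V}}}).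
Hypotheses (e_irr : irreflexive e) (SW : S \subset wedges e).
Hypothesis W_gt0 : 0 < #|wedges e|.
Local Open Scope ring_scope.

Let w : R := Num.sqrt (#|wedges e|)%:R.

Lemma star_le z : (#|star e z|)%:R <= 2 * w.
Proof.
have d2 := sq_le_of_bin (bin_star_le e_irr z) W_gt0.
have w0 : 0 <= w by exact: sqrtr_ge0.
have w2 : w ^+ 2 = (#|wedges e|)%:R by rewrite sqr_sqrtr ?ler0n.
have : (#|star e z| * #|star e z|)%:R <= 4 * w ^+ 2 :> R.
  by rewrite w2 -natrM ler_nat.
rewrite natrM; have := ler0n R #|star e z|; nra.
Qed.

Lemma card_wnbr_le a : (#|wnbr S a|)%:R <= 4 * w.
Proof.
have [aE | naE] := boolP (a \in edges e); last first.
  suff -> : wnbr S a = set0 by rewrite cards0 mulr_ge0 ?sqrtr_ge0.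
  apply/setP => b; rewrite !inE; apply: contraNF naE.
  by move/(subsetP SW)/wedgeP => [].
move: (aE); rewrite inE => /existsP[x /existsP[y /andP[_ /eqP defa]]].
have := subset_leq_card (wnbr_sub_star SW defa).
move/(leq_trans)/(_ (leq_card_setU _ _).1); rewrite -(ler_nat R) natrD => le_wnbr.
by apply: le_trans le_wnbr _; have := star_le x; have := star_le y; lra.
Qed.
End WedgeDegree.

Section Sampling.
Variables (R : realFieldType) (V : finType) (e : rel V) (s : nat).
Local Open Scope ring_scope.

Notation E := (edges e).
Notation m := #|edges e|.
Notation Om := (sample_space e s).

Definition agree (A : {set 'I_s}) (x : 'I_s -> {set V})
    (r : {ffun 'I_s -> {set V}}) : bool :=
  [forall i in A, r i == x i].

Lemma card_agree (A : {set 'I_s}) (x : 'I_s -> {set V}) : {in A, forall i, x i \in E} ->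
  #|[set r in Om | agree A x r]| = (m ^ (s - #|A|))%N.
Proof.
move=> xE; pose F i := [pred a | (a \in E) && ((i \in A) ==> (a == x i))].
have -> : #|[set r in Om | agree A x r]| = #|family F|.
  apply: eq_card => r; rewrite !inE; apply/andP/familyP => [[/forallP rE /forall_inP rx] i|rF].
    by rewrite inE rE; apply/implyP => /rx.
  split; first by apply/forallP => i; have /andP[] := rF i.
  by apply/forall_inP => i iA; have /andP[_ /implyP/(_ iA)] := rF i.
rewrite card_family foldrE big_map big_enum.
rewrite (eq_bigr (fun i => if i \in ~: A then m else 1%N)); last first.
  move=> i _; rewrite inE; case: (boolP (i \in A)) => iA.
    rewrite -(card1 (x i)); apply: eq_card => a; rewrite [a \in _]inE iA /=.
    by rewrite [RHS]inE; case: (a =P x i) => [->|]; rewrite ?andbF ?andbT ?xE.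
  by apply: eq_card => a; rewrite [a \in _]inE (negbTE iA) andbT.
rewrite -big_mkcond prod_nat_const; congr (_ ^ _)%N.
by rewrite -[s in (s - _)%N]card_ord -(cardsC A) addKn.
Qed.

Lemma agree0 x r : agree set0 x r.
Proof. by apply/forall_inP => i; rewrite inE. Qed.

Lemma card_sample : #|Om| = (m ^ s)%N.
Proof.
rewrite -[s in (_ ^ s)%N]subn0 -(cards0 'I_s) -(@card_agree _ (fun=> set0)) => [|i];
  last by rewrite inE.
by apply: eq_card => r; rewrite inE agree0 andbT.
Qed.

Fixpoint esum (n : nat) (G : seq {set V} -> R) : R :=
  if n is n'.+1 then \sum_(a in E) esum n' (fun xs => G (a :: xs)) else G [::].

(* Sampling distinct coordinates js of a conditioned sample: each free
   coordinate of js ranges over all edges, independently. *)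
Lemma sum_agree_map (js : seq 'I_s) (A : {set 'I_s}) (x : 'I_s -> {set V})
    (G : seq {set V} -> R) : uniq js -> {in js, forall j, j \notin A} ->
  {in A, forall i, x i \in E} ->
  \sum_(r in Om | agree A x r) G (map r js) =
    (m ^ (s - #|A| - size js))%:R * esum (size js) G.
Proof.
elim: js A x G => [|j js IH] A x G /=.
  move=> _ _ xE; rewrite subn0 -(card_agree xE) mulr_natl -sumr_const.
  by apply: eq_bigl => r; rewrite inE.
case/andP=> jjs ujs jsA xE.
have jA : j \notin A by apply: jsA; rewrite inE eqxx.
rewrite (partition_big (fun r : {ffun 'I_s -> {set V}} => r j) (mem E)) /=; last first.
  by move=> r /andP[]; rewrite inE => /forallP.
rewrite mulr_sumr; apply: eq_bigr => a aE.
pose y i := if i == j then a else x i.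
have yE : {in j |: A, forall i, y i \in E}.
  by move=> i /setU1P[->|iA]; rewrite /y ?eqxx // ifN ?xE //; apply: contraNneq jA => <-.
have -> : (s - #|A| - (size js).+1 = s - #|j |: A| - size js)%N.
  by rewrite cardsU1 jA add1n -!subnDA addnS addSn.
rewrite -(IH (j |: A) y (fun xs => G (a :: xs))) //; last first.
  move=> i ijs; rewrite !inE negb_or jsA ?inE ?ijs ?orbT // andbT.
  by apply: contraNneq jjs => <-.
apply: eq_big => [r|r /andP[_ /eqP->] //].
rewrite -andbA /agree; congr (_ && _); rewrite andbC.
apply/andP/forall_inP => [[/eqP rj /forall_inP rx] i|ry].
  case/setU1P => [->|iA]; first by rewrite /y eqxx rj.
  by rewrite /y ifN ?rx //; apply: contraNneq jA => <-.
split; first by have := ry j (setU11 _ _); rewrite /y eqxx.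
apply/forall_inP => i iA; have := ry i (setU1r _ iA).
by rewrite /y ifN //; apply: contraNneq jA => <-.
Qed.

Definition Ex (F : {ffun 'I_s -> {set V}} -> R) : R :=
  (\sum_(r in Om) F r) / (#|Om|)%:R.

Lemma Ex_map js G : (0 < m)%N -> uniq js ->
  Ex (fun r => G (map r js)) = esum (size js) G / m%:R ^+ size js.
Proof.
move=> m0 ujs; have ks : (size js <= s)%N.
  by rewrite -(card_uniqP ujs); apply: leq_trans (max_card _) _; rewrite card_ord.
have m0' : m%:R != 0 :> R by rewrite pnatr_eq0 -lt0n.
rewrite /Ex (eq_bigl (fun r => (r \in Om) && agree set0 (fun=> set0) r)); last first.
  by move=> r; rewrite agree0 andbT.
rewrite sum_agree_map //; try by move=> i; rewrite inE.
rewrite cards0 subn0 card_sample.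
have -> : (m ^ s = m ^ (s - size js) * m ^ size js)%N by rewrite -expnD subnK.
by rewrite natrM !natrX; field; rewrite !expf_neq0.
Qed.

Lemma eq_Ex F G : (forall r, F r = G r) -> Ex F = Ex G.
Proof. by move=> FG; rewrite /Ex (eq_bigr _ (fun r _ => FG r)). Qed.

Lemma Ex_sum (I : finType) (P : pred I) (F : I -> {ffun 'I_s -> {set V}} -> R) :
  Ex (fun r => \sum_(i | P i) F i r) = \sum_(i | P i) Ex (F i).
Proof. by rewrite /Ex exchange_big mulr_suml. Qed.

Lemma ExD F G : Ex (fun r => F r + G r) = Ex F + Ex G.
Proof. by rewrite /Ex big_split mulrDl. Qed.

Lemma ExZ c F : Ex (fun r => c * F r) = c * Ex F.
Proof. by rewrite /Ex -mulr_sumr mulrA. Qed.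

Lemma Ex_cst c : (0 < m)%N -> Ex (fun=> c) = c.
Proof.
move=> m0; rewrite /Ex sumr_const -[c *+ _]mulr_natr mulfK // card_sample.
by rewrite pnatr_eq0 -lt0n expn_gt0 m0.
Qed.

Lemma Ex_var F mu : (0 < m)%N -> Ex F = mu ->
  Ex (fun r => (F r - mu) ^+ 2) = Ex (fun r => F r ^+ 2) - mu ^+ 2.
Proof.
move=> m0 EF.
rewrite (@eq_Ex _ (fun r => F r ^+ 2 + (- (2 * mu)) * F r + mu ^+ 2)); last by move=> r; ring.
by rewrite !ExD ExZ Ex_cst // EF; ring.
Qed.

Lemma chebyshev F t : 0 < t ->
  (#|[set r in Om | t < `|F r|]|)%:R / (#|Om|)%:R * t ^+ 2
    <= Ex (fun r => F r ^+ 2).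
Proof.
move=> t0; rewrite mulrAC ler_wpM2r ?invr_ge0 ?ler0n //.
rewrite (bigID (fun r => t < `|F r|)) /= -[X in X <= _]addr0 lerD //; last first.
  by apply: sumr_ge0 => r _; rewrite sqr_ge0.
rewrite mulr_natl -sumr_const (eq_bigl (fun r => (r \in Om) && (t < `|F r|))).
  apply: ler_sum => r /andP[_ tF]; rewrite -(real_normK (num_real (F r))).
  by rewrite !expr2 ler_pM ?ltW.
by move=> r; rewrite inE.
Qed.

Lemma chebyshev_prob F t gamma : (0 < m)%N -> 0 < t ->
  Ex (fun r => F r ^+ 2) <= gamma * t ^+ 2 ->
  1 - gamma <= probX e R (fun r => `|F r| <= t).
Proof.
move=> m0 t0 EF.
have N0 : (#|Om|)%:R != 0 :> R by rewrite card_sample pnatr_eq0 -lt0n expn_gt0 m0.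
pose good := [set r in Om | `|F r| <= t]; pose bad := [set r in Om | t < `|F r|].
have split_Om : (#|good| + #|bad| = #|Om|)%N.
  rewrite -(cardsID [set r | t < `|F r|] Om) addnC /good /bad.
  by congr (_ + _)%N; apply: eq_card => r; rewrite !inE -?leNgt andbC.
have bad_le : (#|bad|)%:R / (#|Om|)%:R <= gamma.
  by rewrite -(ler_pM2r (exprn_gt0 2 t0)); exact: le_trans (chebyshev F t0) EF.
move: bad_le N0; rewrite /probX -/good -split_Om natrD => bad_le N0.
rewrite (_ : _ / _ = 1 - (#|bad|)%:R / ((#|good|)%:R + (#|bad|)%:R)); first lra.
by field.
Qed.
End Sampling.

Definition pairs (s : nat) : {set 'I_s * 'I_s} := [set p : 'I_s * 'I_s | (p.1 < p.2)%N].

Lemma card_pairs s : #|pairs s| = 'C(s, 2).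
Proof.
rewrite -sum1dep_card -(pair_big_dep xpredT (fun i j : 'I_s => (i < j)%N) (fun _ _ => 1%N)) /=.
rewrite (eq_bigr (fun i : 'I_s => \sum_(j : 'I_s) (i < j : nat))) => [|i _]; last first.
  by rewrite big_mkcond /=; apply: eq_bigr => j _; case: (i < j)%N.
rewrite exchange_big /= (eq_bigr (fun j : 'I_s => nat_of_ord j)) => [|j _].
  by rewrite -(big_mkord xpredT (fun j => j)) bin2_sum.
rewrite -big_mkcond /= (big_ord_narrow (F := fun=> 1%N) (ltnW (ltn_ord j))).
by rewrite sum1_card card_ord.
Qed.

Definition coinc s (p q : 'I_s * 'I_s) : nat :=
  (p.1 == q.1) + (p.1 == q.2) + (p.2 == q.1) + (p.2 == q.2).

Lemma sum_eq1 s (i : 'I_s) : \sum_(k : 'I_s) (i == k) = 1.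
Proof. by rewrite (bigD1 i) //= eqxx big1 // => k; rewrite eq_sym => /negbTE->. Qed.

(* Summed over all pairs of index pairs, each of the four coincidence
   conditions fixes one of the four coordinates: 4 s^3 in total. *)
Lemma sum_coinc s : \sum_(p : 'I_s * 'I_s) \sum_(q : 'I_s * 'I_s) coinc p q = 4 * s ^ 3.
Proof.
have sum_fst (i : 'I_s) : \sum_(q : 'I_s * 'I_s) (i == q.1) = s.
  rewrite -(pair_bigA _ (fun k (_ : 'I_s) => nat_of_bool (i == k))) /=.
  by rewrite (eq_bigr (fun k => (i == k) * s)) -?big_distrl /= ?sum_eq1 ?mul1n // => k _;
    rewrite sum_nat_const card_ord mulnC.
have sum_snd (i : 'I_s) : \sum_(q : 'I_s * 'I_s) (i == q.2) = s.
  rewrite -(pair_bigA _ (fun (_ : 'I_s) l => nat_of_bool (i == l))) /=.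
  by rewrite (eq_bigr (fun=> 1)) => [|k _]; rewrite ?sum_eq1 // sum_nat_const card_ord muln1.
rewrite (eq_bigr (fun=> 4 * s)) => [|p _]; last by rewrite !big_split /= !sum_fst !sum_snd; lia.
by rewrite sum_nat_const card_prod card_ord; lia.
Qed.

Lemma sum_coinc_le s (A : {set 'I_s * 'I_s}) :
  \sum_(p in A) \sum_(q in A) coinc p q <= 4 * s ^ 3.
Proof.
rewrite -sum_coinc big_mkcond leq_sum // => p _; case: (p \in A) => //.
by rewrite big_mkcond leq_sum // => q _; case: (q \in A).
Qed.

Section NumericalBound.
Local Open Scope ring_scope.

(* The numerical core of part (2): with 256 m <= g^3 sqrt(W) s, s^2 <= 4 T and
   |S| <= W, the variance bound is at most g times the squared tolerance
   (here cleared of the denominators m^4). *)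
Lemma poly_bound (R : realFieldType) (M w g T s k : R) :
  0 < M -> 0 < w -> 0 < g -> g < 1 -> 0 <= k -> k <= w ^+ 2 -> 0 <= s ->
  s ^+ 2 <= 4 * T -> 256 * M <= g ^+ 3 * w * s ->
  2 * T * k * M ^+ 2 + 32 * s ^+ 3 * w * k * M <= 4 * g ^+ 3 * w ^+ 4 * T ^+ 2.
Proof.
move=> M0 w0 g0 g1 k0 kw s0 sT Ms.
set G := g ^+ 3.
have G0 : 0 < G by rewrite exprn_gt0.
have G1 : G <= 1 by rewrite exprn_ile1 ?ltW.
have [G0' w0' M0'] := And3 (ltW G0) (ltW w0) (ltW M0).
have T0 : 0 <= T by have := sqr_ge0 s; lra.
have s4 : s ^+ 4 <= 16 * T ^+ 2.
  have : s ^+ 2 * s ^+ 2 <= (4 * T) * (4 * T) by apply: ler_pM; rewrite ?sqr_ge0.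
  by rewrite -exprD; lra.
have M2 : M ^+ 2 <= G * w ^+ 2 * T.
  have : (256 * M) * (256 * M) <= (G * w * s) * (G * w * s).
    by apply: ler_pM => //; rewrite mulr_ge0.
  have Gws0 : 0 <= G * w ^+ 2 by rewrite mulr_ge0 ?sqr_ge0.
  have := mulr_ge0 (mulr_ge0 Gws0 (sqr_ge0 s)) (_ : 0 <= 1 - G).
  have := mulr_ge0 Gws0 (_ : 0 <= 4 * T - s ^+ 2).
  rewrite !subr_ge0 => /(_ sT) h1 /(_ G1) h2.
  nra.
have t1 : 2 * T * k * M ^+ 2 <= 2 * G * w ^+ 4 * T ^+ 2.
  have : T * k <= T * w ^+ 2 by apply: ler_wpM2l.
  have : M ^+ 2 * (T * w ^+ 2) <= G * w ^+ 2 * T * (T * w ^+ 2).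
    by apply: ler_wpM2r; rewrite ?mulr_ge0 ?sqr_ge0.
  have := sqr_ge0 M; nra.
have t2 : 32 * s ^+ 3 * w * k * M <= 2 * G * w ^+ 4 * T ^+ 2.
  have sw0 n : 0 <= s ^+ 3 * w ^+ n by rewrite mulr_ge0 ?exprn_ge0.
  have : s ^+ 3 * w * k <= s ^+ 3 * w * w ^+ 2 by apply: ler_wpM2l => //; exact: (sw0 1%N).
  have : s ^+ 3 * w ^+ 3 * (256 * M) <= s ^+ 3 * w ^+ 3 * (G * w * s) by apply: ler_wpM2l.
  have : G * w ^+ 4 * s ^+ 4 <= G * w ^+ 4 * (16 * T ^+ 2).
    by apply: ler_wpM2l => //; exact: mulr_ge0 G0' (exprn_ge0 _ w0').
  nra.
lra.
Qed.

End NumericalBound.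

Section WedgeSampling.
Variables (R : rcfType) (V : finType) (e : rel V) (S : {set {set {set V}}}) (s : nat).
Hypotheses (e_irr : irreflexive e) (SW : S \subset wedges e) (S_neq0 : S != set0).
Local Open Scope ring_scope.

Notation E := (edges e).
Notation m := #|edges e|.
Notation M := (#|edges e|%:R : R).
Notation Ex := (@Ex R V e s).

Definition wS (a b : {set V}) : R := ([set a; b] \in S)%:R.

Definition Y (p : 'I_s * 'I_s) (r : {ffun 'I_s -> {set V}}) : R := wS (r p.1) (r p.2).

Definition p0 : R := (2 * #|S|)%:R / M ^+ 2.

Lemma wS_idem a b : wS a b * wS a b = wS a b.
Proof. by rewrite /wS; case: (_ \in S); rewrite ?mulr1 ?mulr0. Qed.

Lemma wS_sym a b : wS a b = wS b a.
Proof. by rewrite /wS setUC. Qed.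

Lemma wS_edges a b : [set a; b] \in S -> a \in E /\ b \in E.
Proof. by move/(subsetP SW)/wedgeP => []. Qed.

Lemma m_gt0 : (0 < m)%N.
Proof.
have /set0Pn[P PS] := S_neq0; have /(subsetP SW) := PS.
rewrite inE => /existsP[a /existsP[b /and5P[aE _ _ _ _]]].
by apply/card_gt0P; exists a.
Qed.

Lemma W_gt0 : (0 < #|wedges e|)%N.
Proof. by have /set0Pn[P /(subsetP SW) PW] := S_neq0; apply/card_gt0P; exists P. Qed.

Lemma M_gt0 : 0 < M.
Proof. by rewrite ltr0n m_gt0. Qed.

Lemma sum_wS_edges (F : {set V} -> R) : {in [predC E], forall a, F a = 0} ->
  \sum_(a in E) F a = \sum_a F a.
Proof.
by move=> F0; rewrite [RHS](bigID (mem E)) /= [X in _ = _ + X]big1 ?addr0.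
Qed.

Lemma deg_wS a : \sum_(b in E) wS a b = (#|wnbr S a|)%:R.
Proof.
rewrite sum_wS_edges => [|b]; last first.
  by move=> /negP bE; rewrite /wS; case: (boolP (_ \in S)) => // /wS_edges[_ /bE].
rewrite -sum1dep_card natr_sum [RHS]big_mkcond /=.
by apply: eq_bigr => b _; rewrite /wS; case: (_ \in S).
Qed.

Lemma sum_wS : \sum_(a in E) \sum_(b in E) wS a b = (2 * #|S|)%:R.
Proof.
rewrite -card_ordered_pairs => [|P /(subsetP SW)]; last exact: wedge_card2.
rewrite -sum1dep_card natr_sum [RHS]big_mkcond /=.
rewrite -(pair_bigA _ (fun a b => if [set a; b] \in S then 1 else 0)) /=.
rewrite sum_wS_edges => [|a /negP aE]; last first.
  by apply: big1 => b _; rewrite /wS; case: (boolP (_ \in S)) => // /wS_edges[/aE].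
apply: eq_bigr => a _; rewrite sum_wS_edges => [|b /negP bE]; last first.
  by rewrite /wS; case: (boolP (_ \in S)) => // /wS_edges[_ /bE].
by apply: eq_bigr => b _; rewrite /wS; case: (_ \in S).
Qed.

Lemma Ex2 (G : {set V} -> {set V} -> R) (i j : 'I_s) : i != j ->
  Ex (fun r => G (r i) (r j)) = (\sum_(a in E) \sum_(b in E) G a b) / M ^+ 2.
Proof.
move=> ij; apply: (Ex_map (js := [:: i; j]) (fun xs => G (nth set0 xs 0) (nth set0 xs 1)) m_gt0).
by rewrite /= inE ij.
Qed.

Lemma Ex3 (G : {set V} -> {set V} -> {set V} -> R) (i j k : 'I_s) :
  i != j -> i != k -> j != k ->
  Ex (fun r => G (r i) (r j) (r k)) =
    (\sum_(a in E) \sum_(b in E) \sum_(c in E) G a b c) / M ^+ 3.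
Proof.
move=> ij ik jk.
apply: (Ex_map (js := [:: i; j; k])
  (fun xs => G (nth set0 xs 0) (nth set0 xs 1) (nth set0 xs 2)) m_gt0).
by rewrite /= !inE negb_or ij ik jk.
Qed.

Lemma Ex4 (G : {set V} -> {set V} -> {set V} -> {set V} -> R) (i j k l : 'I_s) :
  i != j -> i != k -> i != l -> j != k -> j != l -> k != l ->
  Ex (fun r => G (r i) (r j) (r k) (r l)) =
    (\sum_(a in E) \sum_(b in E) \sum_(c in E) \sum_(d in E) G a b c d) / M ^+ 4.
Proof.
move=> ij ik il jk jl kl.
apply: (Ex_map (js := [:: i; j; k; l])
  (fun xs => G (nth set0 xs 0) (nth set0 xs 1) (nth set0 xs 2) (nth set0 xs 3)) m_gt0).
by rewrite /= !inE !negb_or ij ik il jk jl kl.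
Qed.

Lemma pairs_neq p : p \in pairs s -> p.1 != p.2.
Proof. by rewrite inE neq_ltn => ->. Qed.

Lemma Ex_Y p : p \in pairs s -> Ex (Y p) = p0.
Proof. by move=> /pairs_neq p12; rewrite (Ex2 wS p12) sum_wS. Qed.

Lemma X_sum r : (Xcount S r)%:R = \sum_(p in pairs s) Y p r.
Proof.
rewrite /Xcount -sum1dep_card natr_sum big_mkcondr /=.
by apply: eq_big => [p|p _]; rewrite ?inE // /Y /wS; case: (_ \in S).
Qed.

Lemma expectX_eq : expectX e R S s = ('C(s, 2))%:R * p0.
Proof.
have -> : expectX e R S s = Ex (fun r => (Xcount S r)%:R) by [].
rewrite (eq_Ex e X_sum) Ex_sum.
by rewrite (eq_bigr _ (fun p pP => Ex_Y pP)) sumr_const card_pairs mulr_natl.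
Qed.

Let w : R := Num.sqrt (#|wedges e|)%:R.

(* Bound on the correlation of two index pairs sharing one index. *)
Definition c3 : R := 4 * w * (2 * #|S|)%:R / M ^+ 3.

Lemma p0_ge0 : 0 <= p0.
Proof. by rewrite divr_ge0 ?exprn_ge0 ?ler0n. Qed.

Lemma c3_ge0 : 0 <= c3.
Proof. by rewrite /c3 divr_ge0 ?exprn_ge0 ?ler0n // !mulr_ge0 ?sqrtr_ge0. Qed.

(* Two S-wedges through the same sampled edge: the degree bound enters here. *)
Lemma Ex_star x y z : x != y -> x != z -> y != z ->
  Ex (fun r => wS (r x) (r y) * wS (r x) (r z)) <= c3.
Proof.
move=> xy xz yz; rewrite (Ex3 (fun a b c => wS a b * wS a c) xy xz yz) /c3.
rewrite ler_wpM2r ?invr_ge0 ?exprn_ge0 ?ler0n // -sum_wS mulr_sumr.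
apply: ler_sum => a _.
rewrite (eq_bigr (fun b => wS a b * \sum_(c in E) wS a c)) => [|b _]; last by rewrite mulr_sumr.
rewrite -mulr_suml !deg_wS ler_wpM2r ?ler0n //.
by apply: card_wnbr_le => //; exact: W_gt0.
Qed.

Lemma Ex_disjoint i j k l :
  i != j -> i != k -> i != l -> j != k -> j != l -> k != l ->
  Ex (fun r => Y (i, j) r * Y (k, l) r) = p0 ^+ 2.
Proof.
move=> ij ik il jk jl kl; rewrite (Ex4 (fun a b c d => wS a b * wS c d)) //.
have -> : \sum_(a in E) \sum_(b in E) \sum_(c in E) \sum_(d in E) wS a b * wS c d
    = (\sum_(a in E) \sum_(b in E) wS a b) * (\sum_(c in E) \sum_(d in E) wS c d).
  rewrite mulr_suml; apply: eq_bigr => a _; rewrite mulr_suml; apply: eq_bigr => b _.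
  by rewrite mulr_sumr; apply: eq_bigr => c _; rewrite mulr_sumr.
by rewrite sum_wS /p0; field; rewrite gt_eqF ?M_gt0.
Qed.

Lemma overlap_star (i j k l : 'I_s) : (i < j)%N -> (k < l)%N -> (i, j) != (k, l) ->
  [|| i == k, i == l, j == k | j == l] ->
  exists x y z, [/\ x != y, x != z, y != z &
    forall r : {ffun 'I_s -> {set V}}, Y (i, j) r * Y (k, l) r = wS (r x) (r y) * wS (r x) (r z)].
Proof.
move=> ij kl pq; have lt_neq (a b : 'I_s) : (a < b)%N -> a != b by rewrite neq_ltn => ->.
case/or4P=> /eqP eq; subst.
- exists k, j, l; split=> //; [exact: lt_neq | exact: lt_neq |].
  by apply: contraNneq pq => ->.
- exists l, j, k; split; [exact: lt_neq | rewrite eq_sym; exact: lt_neq | |].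
    by rewrite eq_sym; exact/lt_neq/(ltn_trans kl ij).
  by move=> r; rewrite /Y /= [wS (r k) _]wS_sym.
- exists k, i, l; split; [rewrite eq_sym; exact: lt_neq | exact: lt_neq | |].
    exact/lt_neq/(ltn_trans ij kl).
  by move=> r; rewrite /Y /= [wS (r i) _]wS_sym.
- exists l, i, k; split; [rewrite eq_sym; exact: lt_neq | rewrite eq_sym; exact: lt_neq | |].
    by apply: contraNneq pq => ->.
  by move=> r; rewrite /Y /= [wS (r i) _]wS_sym [wS (r k) _]wS_sym.
Qed.

Lemma Ex_YY_le p q : p \in pairs s -> q \in pairs s ->
  Ex (fun r => Y p r * Y q r) <= p0 ^+ 2 + (p == q)%:R * p0 + (coinc p q)%:R * c3.
Proof.
move=> pP qP; have sq_ge0 := exprn_ge0 2 p0_ge0.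
have coinc_ge0 q' : 0 <= (coinc p q')%:R * c3 by rewrite mulr_ge0 ?ler0n ?c3_ge0.
have [<- | pq] := eqVneq p q.
  rewrite mul1r (eq_Ex e (fun r => wS_idem (r p.1) (r p.2))) Ex_Y //.
  by have := coinc_ge0 p; lra.
rewrite mul0r addr0; have := coinc_ge0 q; move: pP qP pq.
case: p {coinc_ge0} => i j; case: q => k l; rewrite !inE /= => ij kl pq coinc_ge0.
have [ov | nov] := boolP [|| i == k, i == l, j == k | j == l]; last first.
  move: nov; rewrite !negb_or => /and4P[ik il jk jl].
  by rewrite Ex_disjoint ?lerDl // neq_ltn ?ij ?kl.
have [x [y [z [xy xz yz YY]]]] := overlap_star ij kl pq ov.
have : 1 <= (coinc (i, j) (k, l))%:R :> R.
  by rewrite ler1n; move: ov; rewrite /coinc /=; do 4 case: (_ == _).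
have := c3_ge0; rewrite (eq_Ex e YY); have := Ex_star xy xz yz; nra.
Qed.

Let T : R := ('C(s, 2))%:R.

Lemma Ex_X2_le :
  Ex (fun r => (Xcount S r)%:R ^+ 2) <= T ^+ 2 * p0 ^+ 2 + T * p0 + 4 * s%:R ^+ 3 * c3.
Proof.
have X2 r : (Xcount S r)%:R ^+ 2 = \sum_(p in pairs s) \sum_(q in pairs s) Y p r * Y q r.
  by rewrite expr2 X_sum mulr_suml; apply: eq_bigr => p _; rewrite mulr_sumr.
rewrite (eq_Ex e X2) Ex_sum.
apply: le_trans (_ : \sum_(p in pairs s) \sum_(q in pairs s)
    (p0 ^+ 2 + (p == q)%:R * p0 + (coinc p q)%:R * c3) <= _).
  by apply: ler_sum => p pP; rewrite Ex_sum; apply: ler_sum => q qP; apply: Ex_YY_le.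
have inner p : p \in pairs s ->
    \sum_(q in pairs s) (p0 ^+ 2 + (p == q)%:R * p0 + (coinc p q)%:R * c3) =
    T * p0 ^+ 2 + p0 + \sum_(q in pairs s) (coinc p q)%:R * c3.
  move=> pP; rewrite big_split big_split /= sumr_const card_pairs -[_ *+ _]mulr_natl.
  congr (_ + _ + _); rewrite (bigD1 p) //= eqxx mul1r big1 ?addr0 // => q /andP[_ qp].
  by rewrite eq_sym (negbTE qp) mul0r.
rewrite (eq_bigr _ inner) big_split big_split /= !sumr_const card_pairs.
rewrite -[(T * _) *+ _]mulr_natl -[p0 *+ _]mulr_natl.
have -> : \sum_(p in pairs s) \sum_(q in pairs s) (coinc p q)%:R * c3 =
    (\sum_(p in pairs s) \sum_(q in pairs s) coinc p q)%:R * c3.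
  by rewrite natr_sum mulr_suml; apply: eq_bigr => p _; rewrite natr_sum mulr_suml.
rewrite -/T [T ^+ 2]expr2 -mulrA lerD ?ler_wpM2r ?c3_ge0 //.
by rewrite -(natrX _ s 3) -(natrM R 4) ler_nat sum_coinc_le.
Qed.

Lemma var_le :
  Ex (fun r => ((Xcount S r)%:R - expectX e R S s) ^+ 2) <= T * p0 + 4 * s%:R ^+ 3 * c3.
Proof.
rewrite (@Ex_var _ _ e s (fun r => (Xcount S r)%:R) _ m_gt0) // expectX_eq -/T.
by have := Ex_X2_le; rewrite [(T * p0) ^+ 2]exprMn; lra.
Qed.

Definition tol (gamma : R) : R :=
  gamma * (#|wedges e|)%:R / (#|S|)%:R * expectX e R S s.

Lemma w_sq : w ^+ 2 = (#|wedges e|)%:R.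
Proof. by rewrite sqr_sqrtr ?ler0n. Qed.

Lemma w_gt0 : 0 < w.
Proof. by rewrite sqrtr_gt0 ltr0n W_gt0. Qed.

Lemma tol_eq gamma : tol gamma = 2 * gamma * w ^+ 2 * T / M ^+ 2.
Proof.
have S0 : (#|S|)%:R != 0 :> R by rewrite pnatr_eq0 -lt0n card_gt0.
rewrite /tol expectX_eq /p0 w_sq natrM -/T; field.
by rewrite S0 gt_eqF ?M_gt0.
Qed.

Lemma var_small gamma : (2 <= s)%N -> 0 < gamma -> gamma < 1 ->
  256 * M / (gamma ^+ 3 * w) <= s%:R ->
  T * p0 + 4 * s%:R ^+ 3 * c3 <= gamma * tol gamma ^+ 2.
Proof.
move=> s2 g0 g1 hs; have M0 := M_gt0; have w0 := w_gt0.
rewrite -(ler_pM2r (exprn_gt0 4 M0)) tol_eq /p0 /c3.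
have -> : (T * ((2 * #|S|)%:R / M ^+ 2) + 4 * s%:R ^+ 3 * (4 * w * (2 * #|S|)%:R / M ^+ 3))
    * M ^+ 4 = 2 * T * (#|S|)%:R * M ^+ 2 + 32 * s%:R ^+ 3 * w * (#|S|)%:R * M.
  by rewrite natrM; field; rewrite gt_eqF.
have -> : gamma * (2 * gamma * w ^+ 2 * T / M ^+ 2) ^+ 2 * M ^+ 4
    = 4 * gamma ^+ 3 * w ^+ 4 * T ^+ 2 by field; rewrite gt_eqF.
apply: poly_bound; rewrite ?ler0n //.
- by rewrite w_sq ler_nat subset_leq_card.
- by rewrite -natrX -natrM ler_nat -mulnn sq_le_bin.
- by move: hs; rewrite ler_pdivrMr ?mulr_gt0 ?exprn_gt0 // [s%:R * _]mulrC.
Qed.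

Lemma concentration (gamma : R) : (2 <= s)%N -> 0 < gamma -> gamma < 1 ->
  256 * M / (gamma ^+ 3 * w) <= s%:R ->
  1 - gamma <= probX e R (fun r : {ffun 'I_s -> {set V}} =>
    `|(Xcount S r)%:R - expectX e R S s|
      <= gamma * (#|wedges e|)%:R / (#|S|)%:R * expectX e R S s).
Proof.
move=> s2 g0 g1 hs; apply: (chebyshev_prob (t := tol gamma) m_gt0).
  by rewrite tol_eq divr_gt0 ?exprn_gt0 ?M_gt0 // !mulr_gt0 ?exprn_gt0 ?w_gt0 ?ltr0n ?bin_gt0.
exact: le_trans var_le (var_small s2 g0 g1 hs).
Qed.
End WedgeSampling.

Local Open Scope ring_scope.

Theorem mainTheorem2 (R : rcfType) :
  (forall (V : finType) (e : rel V) (S : {set {set {set V}}}) (s : nat),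
     symmetric e -> irreflexive e ->
     S \subset wedges e -> S != set0 -> (2 <= s)%N ->
     expectX e R S s =
       ('C(s, 2))%:R * (2 * (#|S|)%:R / ((#|edges e|)%:R ^+ 2)))
  /\
  (exists c' : R,
     forall (V : finType) (e : rel V) (S : {set {set {set V}}}) (s : nat)
            (gamma : R),
     symmetric e -> irreflexive e ->
     S \subset wedges e -> S != set0 -> (2 <= s)%N ->
     0 < gamma -> gamma < 1 ->
     (#|edges e| <= #|wedges e|)%N ->
     c' * (#|edges e|)%:R / (gamma ^+ 3 * Num.sqrt (#|wedges e|)%:R) <= s%:R ->
     1 - gamma <=
       probX e R (fun r : {ffun 'I_s -> {set V}} =>
         `|(Xcount S r)%:R - expectX e R S s|
           <= gamma * (#|wedges e|)%:R / (#|S|)%:R * expectX e R S s)).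
Proof.
split=> [V e S s _ e_irr SW S0 _ | ].
  by rewrite expectX_eq // /p0 natrM.
exists 256 => V e S s gamma _ e_irr SW S0 s2 g0 g1 _ hs.
exact: concentration.
Qed.
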